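(* Let $\mathbf A$ be a Mal'cev algebra, $n\ge1$, and $\alpha_0,\dots,\alpha_{n-1}$ congruences of $\mathbf A$. Then $\psi_i(\Delta(\alpha_0,\dots,\alpha_{n-1}))=\psi_j(\Delta(\alpha_0,\dots,\alpha_{n-1}))$ for all $i,j<2^n$.
   Context: A Mal'cev algebra is an algebra with a ternary term operation $q$ satisfying $q(x,x,y)=y=q(y,x,x)$. Tuples in $A^m$ are indexed by $0,\dots,m-1$; $k_{(i)}$ is the $i$-th binary digit of $k$ (least significant is $i=0$). For $a,b\in A$ and $i<n$, $\mathbf c_i^n(a,b)\in A^{2^n}$ has $k$-th coordinate $a$ if $k_{(i)}=0$ and $b$ if $k_{(i)}=1$. $\Delta(\alpha_0,\dots,\alpha_{n-1})$ is the subuniverse of $\mathbf A^{2^n}$ generated by $\{\mathbf c_i^n(a,b): i<n,\ (a,b)\in\alpha_i\}$. Forks: for $R\subseteq A^m$ and $i<m$, $\psi_i(R)$ is the set of pairs $(a,b)$ for which there exist $\mathbf c,\mathbf d\in R$ with $c_i=a$, $d_i=b$, and $c_k=d_k$ for all $k\neq i$. *)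

From mathcomp Require Import all_boot.
Set Implicit Arguments. Unset Strict Implicit. Unset Printing Implicit Defensive.

Record algebra := Algebra {
  carrier :> Type;
  Op : Type;
  arity : Op -> nat;
  op : forall o : Op, ('I_(arity o) -> carrier) -> carrier
}.

Inductive term (A : algebra) (X : Type) : Type :=
  | Var : X -> term A X
  | App : forall o : Op A, ('I_(arity o) -> term A X) -> term A X.

Fixpoint eval_term (A : algebra) (X : Type) (env : X -> A) (t : term A X) : A :=
  match t with
  | Var x => env x
  | App o ts => op (fun k => eval_term env (ts k))
  end.

Definition env3 (A : algebra) (x y z : A) (k : 'I_3) : A :=
  match val k with 0 => x | 1 => y | _ => z end.

Definition malcev (A : algebra) : Prop :=
  exists q : term A 'I_3,
    forall x y : A, eval_term (env3 x x y) q = y /\ eval_term (env3 y x x) q = y.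

Definition congruence (A : algebra) (R : A -> A -> Prop) : Prop :=
  [/\ (forall x, R x x),
      (forall x y, R x y -> R y x),
      (forall x y z, R x y -> R y z -> R x z) &
      (forall (o : Op A) (a b : 'I_(arity o) -> A),
          (forall k, R (a k) (b k)) -> R (op a) (op b))].

Definition subuniverse_pow (A : algebra) (m : nat) (S : ('I_m -> A) -> Prop) : Prop :=
  forall (o : Op A) (v : 'I_(arity o) -> 'I_m -> A),
    (forall k, S (v k)) -> S (fun j => op (fun k => v k j)).

Definition Sg_pow (A : algebra) (m : nat) (G : ('I_m -> A) -> Prop)
  : ('I_m -> A) -> Prop :=
  fun x => forall S, subuniverse_pow S -> (forall y, G y -> S y) -> S x.

(* i-th binary digit of k (least significant is i = 0) *)
Definition bit (i k : nat) : bool := odd (k %/ 2 ^ i).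

Definition cvec (A : algebra) (n i : nat) (a b : A) : 'I_(2 ^ n) -> A :=
  fun k => if bit i k then b else a.

Definition Delta (A : algebra) (n : nat) (alpha : 'I_n -> A -> A -> Prop)
  : ('I_(2 ^ n) -> A) -> Prop :=
  Sg_pow (fun x => exists (i : 'I_n) (a b : A), alpha i a b /\ x = @cvec A n i a b).

Definition fork (A : algebra) (m : nat) (R : ('I_m -> A) -> Prop) (i : 'I_m)
  (a b : A) : Prop :=
  exists c d : 'I_m -> A,
    [/\ R c, R d, c i = a, d i = b & forall k, k != i -> c k = d k].

From Stdlib Require Import PeanoNat FunctionalExtensionality.
From mathcomp Require Import all_boot.

Set Implicit Arguments.
Unset Strict Implicit.

(* For every mask [m < 2^n] the coordinate permutation
   [k |-> k xor m] of [A^(2^n)] maps each generator [c_l(a,b)] of [Delta] to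
   [c_l(a,b)] or [c_l(b,a)], so it preserves [Delta]; being an involution it
   then carries forks at [i] to forks at [i xor m], and [m := i xor j] sends
   [i] to [j]. *)

Lemma odd_Nat_odd k : odd k = Nat.odd k.
Proof. by elim: k => [//|k IHk]; rewrite Nat.odd_succ -Nat.negb_odd -IHk. Qed.

Lemma expn_Nat_pow b l : b ^ l = Nat.pow b l.
Proof. by elim: l => [//|l IHl]; rewrite expnS IHl -multE. Qed.

Lemma divn_Nat_div k d : 0 < d -> k %/ d = Nat.div k d.
Proof.
move=> d_gt0; apply: (Nat.div_unique k d (k %/ d) (k %% d)).
  by apply/ltP; rewrite ltn_mod.
by rewrite {1}(divn_eq k d) mulnC multE plusE.
Qed.

Lemma shiftr_divn k l : Nat.shiftr k l = k %/ 2 ^ l.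
Proof. by rewrite Nat.shiftr_div_pow2 divn_Nat_div ?expn_gt0 // expn_Nat_pow. Qed.

Lemma bit_lxor l k m : bit l (Nat.lxor k m) = bit l k (+) bit l m.
Proof.
have bit_testbit x : bit l x = Nat.testbit x l.
  by rewrite Nat.testbit_odd shiftr_divn -odd_Nat_odd.
by rewrite !bit_testbit Nat.lxor_spec; case: Nat.testbit; case: Nat.testbit.
Qed.

Lemma lxor_ltn n k m : k < 2 ^ n -> m < 2 ^ n -> Nat.lxor k m < 2 ^ n.
Proof.
move=> /divn_small k_small /divn_small m_small.
have : Nat.lxor k m %/ 2 ^ n = 0.
  by rewrite -shiftr_divn Nat.shiftr_lxor !shiftr_divn k_small m_small.
by move=> xor_small; rewrite ltnNge -divn_gt0 ?expn_gt0 // xor_small.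
Qed.

Definition xor_ord {n} (k m : 'I_(2 ^ n)) : 'I_(2 ^ n) :=
  Ordinal (lxor_ltn (ltn_ord k) (ltn_ord m)).

Lemma xor_ordK n (m : 'I_(2 ^ n)) : involutive (xor_ord ^~ m).
Proof.
by move=> k; apply: val_inj; rewrite /= Nat.lxor_assoc Nat.lxor_nilpotent Nat.lxor_0_r.
Qed.

Lemma xor_ord_xor n (i j : 'I_(2 ^ n)) : xor_ord i (xor_ord i j) = j.
Proof.
by apply: val_inj; rewrite /= -Nat.lxor_assoc Nat.lxor_nilpotent Nat.lxor_0_l.
Qed.

Lemma cvec_xor_ord (A : algebra) n (l : nat) (a b : A) (m : 'I_(2 ^ n)) :
  cvec l a b \o xor_ord ^~ m =
  if bit l m then cvec l b a else cvec l a b.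
Proof.
apply: functional_extensionality => k; rewrite /comp /cvec bit_lxor.
by case: (bit l m); case: (bit l k).
Qed.

Section SubuniversePow.
Variables (A : algebra) (p : nat).

Lemma Sg_pow_subuniverse (G : ('I_p -> A) -> Prop) : subuniverse_pow (Sg_pow G).
Proof. by move=> o v Sg_v S S_sub G_S; apply: (S_sub) => k; exact: Sg_v. Qed.

Lemma Sg_pow_comp (G : ('I_p -> A) -> Prop) (s : 'I_p -> 'I_p) :
  (forall y, G y -> Sg_pow G (y \o s)) ->
  forall x, Sg_pow G x -> Sg_pow G (x \o s).
Proof.
move=> G_comp x Sg_x; apply: (Sg_x (fun y => Sg_pow G (y \o s))) => //.
by move=> o v Sg_v; exact: (@Sg_pow_subuniverse G o (fun k j => v k (s j)) Sg_v).
Qed.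

Lemma fork_comp (R : ('I_p -> A) -> Prop) (s : 'I_p -> 'I_p) :
  involutive s -> (forall x, R x -> R (x \o s)) ->
  forall i a b, fork R i a b -> fork R (s i) a b.
Proof.
move=> sK R_comp i a b [c [d [Rc Rd ci dj cd]]].
exists (c \o s), (d \o s); split; rewrite /= ?sK //; try exact: R_comp.
by move=> k ne_k_si; apply: cd; apply: contra ne_k_si => /eqP <-; rewrite sK.
Qed.

End SubuniversePow.

Lemma Delta_comp_xor (A : algebra) n (alpha : 'I_n -> A -> A -> Prop)
    (m : 'I_(2 ^ n)) :
  (forall l a b, alpha l a b -> alpha l b a) ->
  forall x, Delta alpha x -> Delta alpha (x \o xor_ord ^~ m).
Proof.
move=> alpha_sym; apply: Sg_pow_comp => _ [l [a [b [ab ->]]]] S _ G_S.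
apply: G_S; rewrite cvec_xor_ord.
by case: (bit l m); [exists l, b, a; split; first exact: alpha_sym | exists l, a, b].
Qed.

Theorem mainTheorem6 (A : algebra) (n : nat) (alpha : 'I_n -> A -> A -> Prop) :
  malcev A -> 1 <= n -> (forall i, congruence (alpha i)) ->
  forall i j : 'I_(2 ^ n), forall a b : A,
    fork (Delta alpha) i a b <-> fork (Delta alpha) j a b.
Proof.
move=> _ _ alpha_cong i j a b.
have alpha_sym l x y : alpha l x y -> alpha l y x by case: (alpha_cong l) => _ + _ _; apply.
have fork_xor (k m : 'I_(2 ^ n)) :
    fork (Delta alpha) k a b -> fork (Delta alpha) (xor_ord k m) a b.
  exact: (fork_comp (xor_ordK m) (Delta_comp_xor m alpha_sym)).
by split => [/(fork_xor _ (xor_ord i j))|/(fork_xor _ (xor_ord j i))];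
  rewrite xor_ord_xor.
Qed.
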